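(* Let $\mathcal A_+,\mathcal A_-\subseteq\mathbb Z^n$ be disjoint finite sets with $\mathcal A=\mathcal A_+\cup\mathcal A_-$ full dimensional. If $\nabla_{>0}(\mathcal A_+,\mathcal A_-)\neq\varnothing$, then $\tau(\nabla_{\mathbb C}(\mathcal A))$ equals the Zariski closure of $\nabla_{>0}(\mathcal A_+,\mathcal A_-)$ in $\mathbb C^{\mathcal A}$.
   Context: For disjoint finite $\mathcal A_+,\mathcal A_-\subseteq\mathbb Z^n$, a signomial with signed support $(\mathcal A_+,\mathcal A_-)$ is $f_c(x)=\sum_{a\in\mathcal A_+}c_ax^a-\sum_{b\in\mathcal A_-}c_bx^b$ with $c\in\mathbb R^{\mathcal A}_{>0}$ (nonsigned coefficients). Its critical system is $F(c,x)=(f_c(x),x_1\partial_{x_1}f_c(x),\dots,x_n\partial_{x_n}f_c(x))$, and $\nabla_{>0}(\mathcal A_+,\mathcal A_-)=\{c\in\mathbb R^{\mathcal A}_{>0}:F(c,x)=0\text{ for some }x\in\mathbb R^n_{>0}\}$. $\mathcal A$ is full dimensional if $\dim\operatorname{conv}(\mathcal A)=n$. The $\mathcal A$-discriminant variety $\nabla_{\mathbb C}(\mathcal A)$ is the Zariski closure in $\mathbb C^{\mathcal A}$ of the set of $c\in\mathbb C^{\mathcal A}$ such that $\sum_{a\in\mathcal A}c_ax^a$ has a singular zero in $(\mathbb C^* )^n$, i.e. a point where it and all $x_i\partial_{x_i}$ of it vanish. Let $\sigma\in\{\pm1\}^{\mathcal A}$ with $\sigma_a=1$ for $a\in\mathcal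 A_+$, $\sigma_a=-1$ for $a\in\mathcal A_-$, and $\tau:\mathbb C^{\mathcal A}\to\mathbb C^{\mathcal A}$, $\tau(x)=(\sigma_ax_a)_a$. *)

From HB Require Import structures.
From mathcomp Require Import all_boot all_order all_algebra.
From mathcomp Require Import reals.
From mathcomp.real_closed Require Import complex.
From mathcomp Require mpoly.

Set Implicit Arguments.
Unset Strict Implicit.
Unset Printing Implicit Defensive.
Import Order.TTheory GRing.Theory Num.Theory.
Local Open Scope ring_scope.

Section Defs.
Variable R : realType.
Local Notation C := (R[i]).

(* Data: A = {a j | j < k} subset of Z^n (a injective), sign s j = true iff a j \in A_+ *)

Definition lmon (T : unitRingType) (n : nat) (x : 'I_n -> T) (a : 'I_n -> int) : T :=
  \prod_(i < n) (x i ^ (a i)).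

Definition sgn (T : pzRingType) (b : bool) : T := if b then 1 else -1.

Definition signomial (n k : nat) (a : 'I_k -> 'I_n -> int) (s : 'I_k -> bool)
  (c : 'I_k -> R) (x : 'I_n -> R) : R :=
  \sum_(j < k) sgn R (s j) * c j * lmon x (a j).

(* x_i d/dx_i f_c (x) ; for a Laurent monomial x_i d/dx_i x^a = a_i x^a *)
Definition signomial_toric_deriv (n k : nat) (a : 'I_k -> 'I_n -> int) (s : 'I_k -> bool)
  (c : 'I_k -> R) (x : 'I_n -> R) (i : 'I_n) : R :=
  \sum_(j < k) sgn R (s j) * c j * (a j i)%:~R * lmon x (a j).

Definition nabla_pos (n k : nat) (a : 'I_k -> 'I_n -> int) (s : 'I_k -> bool)
  (c : 'I_k -> R) : Prop :=
  (forall j, 0 < c j) /\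
  exists x : 'I_n -> R, (forall i, 0 < x i) /\
    signomial a s c x = 0 /\ (forall i, signomial_toric_deriv a s c x i = 0).

Definition cpoly_eval (n k : nat) (a : 'I_k -> 'I_n -> int) (c : 'I_k -> C)
  (x : 'I_n -> C) : C := \sum_(j < k) c j * lmon x (a j).

Definition cpoly_toric_deriv (n k : nat) (a : 'I_k -> 'I_n -> int) (c : 'I_k -> C)
  (x : 'I_n -> C) (i : 'I_n) : C := \sum_(j < k) c j * (a j i)%:~R * lmon x (a j).

Definition has_sing_zero (n k : nat) (a : 'I_k -> 'I_n -> int) (c : 'I_k -> C) : Prop :=
  exists x : 'I_n -> C, (forall i, x i != 0) /\
    cpoly_eval a c x = 0 /\ (forall i, cpoly_toric_deriv a c x i = 0).

Definition zariski_closure (k : nat) (S : ('I_k -> C) -> Prop) : ('I_k -> C) -> Prop :=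
  fun z => forall p : mpoly.mpoly k C,
    (forall y, S y -> mpoly.meval y p = 0) -> mpoly.meval z p = 0.

Definition disc_variety (n k : nat) (a : 'I_k -> 'I_n -> int) : ('I_k -> C) -> Prop :=
  zariski_closure (has_sing_zero a).

Definition tau (k : nat) (s : 'I_k -> bool) (z : 'I_k -> C) : 'I_k -> C :=
  fun j => sgn C (s j) * z j.

(* dim conv(A) = n : A nonempty and the differences a_j - a_j0 span R^n *)
Definition full_dim (n k : nat) (a : 'I_k -> 'I_n -> int) : Prop :=
  exists j0 : 'I_k,
    \rank (\matrix_(j < k, i < n) (((a j i - a j0 i)%:~R) : R)) = n.

End Defs.

From HB Require Import structures.
From mathcomp Require Import all_boot all_order all_algebra.
From mathcomp Require Import reals.
From mathcomp.real_closed Require Import complex.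
From mathcomp Require Import mpoly.
From mathcomp Require Import ring lra.
From Stdlib Require Import FunctionalExtensionality.
Set Implicit Arguments.
Unset Strict Implicit.
Unset Printing Implicit Defensive.
Import Order.TTheory GRing.Theory Num.Theory.
Local Open Scope ring_scope.
Local Open Scope complex_scope.

(* A coefficient vector c lies in nabla_{>0} iff, for some positive x, the vector
   (sigma_a c_a x^a)_a is a kernel vector of the matrix with rows 1 and A having
   sign pattern sigma; it has a singular zero x in (C^* )^n iff (c_a x^a)_a is a
   complex kernel vector.  Fix a positive kernel vector v0 and a complex one u.
   For small real l, m the real kernel vectors v0 + l Re(u - v0) + m Im(u - v0)
   keep the sign pattern sigma, so after division by y^a, y positive, they give
   points of nabla_{>0}.  A polynomial p vanishing on nabla_{>0} thus vanishes at
   sigma (v0 + l Re(u - v0) + m Im(u - v0)) / x^a for all small positive l, m and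
   positive x.  This is a Laurent polynomial in each of l, m, x_1, ..., x_n
   separately, so it vanishes for all nonzero complex values of these variables,
   in particular at l = 1, m = i, where it is p (tau (u / x^a)).  Hence tau maps
   the singular locus into the closure of nabla_{>0}; the reverse inclusion is
   clear, and tau is a linear involution, so it commutes with Zariski closure. *)

Section Laurent.
Variable F : fieldType.

Definition laurent (h : F -> F) := exists (P : {poly F}) (N : nat),
  forall z, z != 0 -> h z * z ^+ N = P.[z].

Lemma eq_laurent h1 h2 : h1 =1 h2 -> laurent h1 -> laurent h2.
Proof. by move=> E [P [N H]]; exists P, N => z nz; rewrite -E H. Qed.

Lemma laurent_cst c : laurent (fun=> c).
Proof. by exists c%:P, 0%N => z _; rewrite expr0 mulr1 hornerC. Qed.

Lemma laurent_id : laurent id.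
Proof. by exists 'X, 0%N => z _; rewrite expr0 mulr1 hornerX. Qed.

Lemma laurentD h1 h2 : laurent h1 -> laurent h2 -> laurent (h1 \+ h2).
Proof.
move=> [P1 [N1 H1]] [P2 [N2 H2]].
exists (P1 * 'X^N2 + P2 * 'X^N1), (N1 + N2)%N => z nz.
rewrite hornerD !hornerM !hornerXn -H1 // -H2 // exprD /=; ring.
Qed.

Lemma laurentM h1 h2 : laurent h1 -> laurent h2 -> laurent (h1 \* h2).
Proof.
move=> [P1 [N1 H1]] [P2 [N2 H2]].
exists (P1 * P2), (N1 + N2)%N => z nz.
rewrite hornerM -H1 // -H2 // exprD /=; ring.
Qed.

Lemma laurent_sum (I : Type) (r : seq I) (h : I -> F -> F) :
  (forall i, laurent (h i)) -> laurent (fun z => \sum_(i <- r) h i z).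
Proof.
move=> Hh; elim: r => [|i r IH].
  by apply: eq_laurent (laurent_cst 0) => z; rewrite big_nil.
by apply: eq_laurent (laurentD (Hh i) IH) => z; rewrite big_cons.
Qed.

Lemma laurent_prod (I : Type) (r : seq I) (h : I -> F -> F) :
  (forall i, laurent (h i)) -> laurent (fun z => \prod_(i <- r) h i z).
Proof.
move=> Hh; elim: r => [|i r IH].
  by apply: eq_laurent (laurent_cst 1) => z; rewrite big_nil.
by apply: eq_laurent (laurentM (Hh i) IH) => z; rewrite big_cons.
Qed.

Lemma laurentX h m : laurent h -> laurent (fun z => h z ^+ m).
Proof.
move=> Hh; elim: m => [|m IH].
  by apply: eq_laurent (laurent_cst 1) => z; rewrite expr0.
by apply: eq_laurent (laurentM Hh IH) => z; rewrite /= exprS.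
Qed.

Lemma laurent_expz (e : int) : laurent (fun z => z ^ e).
Proof.
case: e => m; first exact: laurentX laurent_id.
exists 1, m.+1 => z nz.
by rewrite hornerC NegzE -invr_expz mulVf // expfz_neq0.
Qed.

Lemma laurent_meval k (p : {mpoly F[k]}) (h : 'I_k -> F -> F) :
  (forall j, laurent (h j)) -> laurent (fun z => p.@[fun j => h j z]).
Proof.
move=> Hh; apply: eq_laurent (fun z => esym (mevalE _ _)) _.
apply: laurent_sum => m; apply: laurentM; first exact: laurent_cst.
by apply: laurent_prod => i; apply: laurentX.
Qed.

Lemma laurent_eq0 h (f : nat -> F) : laurent h -> injective f ->
  (forall t, f t != 0) -> (forall t, h (f t) = 0) ->
  forall z, z != 0 -> h z = 0.
Proof.
move=> [P [N HP]] finj fnz fz z nz.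
have P0 : P = 0.
  apply/eqP; apply: contraT => Pn0.
  have := max_poly_roots Pn0 (rs := [seq f t | t <- iota 0 (size P)]).
  rewrite size_map size_iota ltnn; apply; last by rewrite map_inj_uniq ?iota_uniq.
  by apply/allP => _ /mapP [t _ ->]; apply/rootP; rewrite -HP // fz mul0r.
apply/eqP; move: (HP z nz); rewrite P0 horner0 => /eqP.
by rewrite mulf_eq0 expf_eq0 (negPf nz) andbF orbF.
Qed.

End Laurent.

Arguments laurent_expz {F} e.

Section SeparatelyLaurent.
Variables (F : fieldType) (I : finType).

Definition separately_laurent (G : (I -> F) -> F) :=
  forall (u : I -> F) i, laurent (fun z => G (dfwith u (i := i) z)).

Lemma separately_laurent_eq0 G (f : nat -> F) : separately_laurent G ->
  injective f -> (forall t, f t != 0) -> (forall t : I -> nat, G (f \o t) = 0) ->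
  forall u, (forall i, u i != 0) -> G u = 0.
Proof.
move=> HG finj fnz Gf.
suff Gr (r : seq I) u : (forall i, u i != 0) ->
    (forall i, i \notin r -> exists t, u i = f t) -> G u = 0.
  by move=> u unz; apply: (Gr (enum I)) => // i; rewrite mem_enum.
elim: r u => [|i r IH] u unz uf.
  have [t tu] := fin_all_exists (fun i => uf i isT).
  by have -> : u = f \o t by apply: functional_extensionality.
have -> : u = dfwith u (i := i) (u i).
  by apply: functional_extensionality => j; case: dfwithP.
apply: (laurent_eq0 (HG u i) finj fnz) (unz i) => t.
apply: IH => j; have [<-|ij] := eqVneq i j.
- by rewrite dfwith_in.
- by rewrite dfwith_out.
- by rewrite dfwith_in; exists t.
- by rewrite dfwith_out // => jr; apply: uf; rewrite in_cons negb_or eq_sym ij.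
Qed.

End SeparatelyLaurent.

Lemma mul_sgn_sgn (T : pzRingType) b : sgn T b * sgn T b = 1.
Proof. by case: b; rewrite /sgn ?mulr1 ?mulrNN ?mulr1. Qed.

Lemma rmorph_sgn (S T : nzRingType) (f : {rmorphism S -> T}) b : f (sgn S b) = sgn T b.
Proof. by case: b; rewrite /sgn ?rmorph1 ?rmorphN1. Qed.

Lemma lmon_neq0 (F : fieldType) n (x : 'I_n -> F) e :
  (forall i, x i != 0) -> lmon x e != 0.
Proof. by move=> xnz; apply/prodf_neq0 => i _; rewrite expfz_neq0. Qed.

Lemma lmon_gt0 (R : realFieldType) n (x : 'I_n -> R) e :
  (forall i, 0 < x i) -> 0 < lmon x e.
Proof. by move=> xpos; apply: prodr_gt0 => i _; rewrite exprz_gt0. Qed.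

Lemma fmorph_lmon (F K : fieldType) (f : {rmorphism F -> K}) n (x : 'I_n -> F) e :
  f (lmon x e) = lmon (f \o x) e.
Proof. by rewrite rmorph_prod; apply: eq_bigr => i _; rewrite fmorphXz. Qed.

Lemma lmonV (F : fieldType) n (x : 'I_n -> F) e :
  (lmon x e)^-1 = \prod_(i < n) x i ^ (- e i).
Proof. by rewrite -prodfV; apply: eq_bigr => i _; rewrite invr_expz. Qed.

Section SeparatelyLaurentClosure.
Variables (F : fieldType) (I : finType).
Implicit Types G H : (I -> F) -> F.

Lemma separately_laurent_cst c : separately_laurent (fun _ : I -> F => c).
Proof. by move=> u i; exact: laurent_cst. Qed.

Lemma separately_laurent_coord_expz j (e : int) :
  separately_laurent (fun u : I -> F => u j ^ e).
Proof.
move=> u i; have [<-|ij] := eqVneq i j.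
  by apply: eq_laurent (laurent_expz e) => z; rewrite dfwith_in.
by apply: eq_laurent (laurent_cst (u j ^ e)) => z; rewrite dfwith_out.
Qed.

Lemma separately_laurent_coord j : separately_laurent (fun u : I -> F => u j).
Proof.
by move=> u i; apply: eq_laurent (separately_laurent_coord_expz j 1 u i) => z; rewrite expr1z.
Qed.

Lemma separately_laurentD G H : separately_laurent G -> separately_laurent H ->
  separately_laurent (G \+ H).
Proof. by move=> HG HH u i; apply: laurentD. Qed.

Lemma separately_laurentM G H : separately_laurent G -> separately_laurent H ->
  separately_laurent (G \* H).
Proof. by move=> HG HH u i; apply: laurentM. Qed.

Lemma separately_laurent_prod (J : Type) (r : seq J) (G : J -> (I -> F) -> F) :
  (forall j, separately_laurent (G j)) ->
  separately_laurent (fun u => \prod_(j <- r) G j u).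
Proof. by move=> HG u i; apply: laurent_prod => j; apply: HG. Qed.

Lemma separately_laurent_meval k (p : {mpoly F[k]}) (G : 'I_k -> (I -> F) -> F) :
  (forall j, separately_laurent (G j)) -> separately_laurent (fun u => p.@[fun j => G j u]).
Proof. by move=> HG u i; apply: laurent_meval => j; apply: HG. Qed.

Lemma separately_laurent_lmonV n (h : 'I_n -> I) e :
  separately_laurent (fun u : I -> F => (lmon (u \o h) e)^-1).
Proof.
move=> u i; apply: eq_laurent (separately_laurent_prod (index_enum _)
  (fun l => separately_laurent_coord_expz (h l) (- e l)) u i) => z.
by rewrite lmonV.
Qed.

End SeparatelyLaurentClosure.

Lemma small_perturbation_gt0 (R : realFieldType) (I : finType) (q r r' : I -> R) :
  (forall j, 0 < q j) -> exists2 rho : R, 0 < rho &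
    forall l m j, `|l| <= rho -> `|m| <= rho -> 0 < q j + l * r j + m * r' j.
Proof.
move=> q_gt0; pose e j := `|r j| + `|r' j|.
have ratio_ge0 j : 0 <= e j / q j by rewrite divr_ge0 ?addr_ge0 // ltW.
pose E := \sum_j e j / q j.
have E_ge0 : 0 <= E by apply: sumr_ge0.
exists (1 + E)^-1 => [|l m j hl hm]; first by rewrite invr_gt0; lra.
have ratio_le : e j / q j <= E by rewrite /E (bigD1 j) //= lerDl sumr_ge0.
have pert_lt : `|l * r j + m * r' j| < q j.
  apply: (@le_lt_trans _ _ ((1 + E)^-1 * e j)).
    apply: le_trans (ler_normD _ _) _; rewrite !normrM mulrDr.
    by apply: lerD; apply: ler_wpM2r.
  rewrite mulrC ltr_pdivrMr; last lra.
  by rewrite -ltr_pdivrMl ?q_gt0 //; lra.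
have := ler_norm (- (l * r j + m * r' j)); rewrite normrN; lra.
Qed.

Section ToricKernel.
Variables (n k : nat) (a : 'I_k -> 'I_n -> int).

Definition toric_kernel (T : pzRingType) (v : 'I_k -> T) :=
  \sum_j v j = 0 /\ forall i, \sum_j v j * (a j i)%:~R = 0.

Lemma eq_toric_kernel (T : pzRingType) (v w : 'I_k -> T) :
  v =1 w -> toric_kernel v -> toric_kernel w.
Proof.
move=> vw [v0 vd]; split=> [|i]; under eq_bigr do rewrite -vw; [exact: v0 | exact: vd].
Qed.

Lemma toric_kernelDZ (T : pzRingType) (v w : 'I_k -> T) (l : T) :
  toric_kernel v -> toric_kernel w -> toric_kernel (fun j => v j + l * w j).
Proof.
move=> [v0 vd] [w0 wd]; split=> [|i].
  by rewrite big_split /= -mulr_sumr v0 w0 mulr0 addr0.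
under eq_bigr do rewrite mulrDl -mulrA.
by rewrite big_split /= -mulr_sumr vd wd mulr0 addr0.
Qed.

Lemma toric_kernel_additive (S T : pzRingType) (f : {additive S -> T}) (v : 'I_k -> S) :
  toric_kernel v -> toric_kernel (f \o v).
Proof.
move=> [v0 vd]; split=> [|i]; first by rewrite -raddf_sum v0 raddf0.
rewrite -[RHS](raddf0 f) -(vd i) raddf_sum; apply: eq_bigr => j _.
by rewrite /= !mulrzr raddfMz.
Qed.

End ToricKernel.

Section SignedSupport.
Variables (R : realType) (n k : nat) (a : 'I_k -> 'I_n -> int) (s : 'I_k -> bool).
Local Notation C := R[i].

Lemma nabla_posE c : nabla_pos a s c <-> (forall j, 0 < c j) /\
  exists2 x, (forall i, 0 < x i) &
    toric_kernel a (fun j => sgn R (s j) * c j * lmon x (a j)).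
Proof.
have E x i : signomial_toric_deriv a s c x i =
    \sum_j sgn R (s j) * c j * lmon x (a j) * (a j i)%:~R.
  by apply: eq_bigr => j _; rewrite mulrAC.
split=> [[cpos [x [xpos [f0 d0]]]]|[cpos [x xpos [f0 d0]]]]; split=> //.
  by exists x => //; split=> // i; rewrite -E.
by exists x; split=> //; split=> // i; rewrite E.
Qed.

Lemma has_sing_zeroE (w : 'I_k -> C) : has_sing_zero a w <->
  exists2 x, (forall i, x i != 0) & toric_kernel a (fun j => w j * lmon x (a j)).
Proof.
have E x i : cpoly_toric_deriv a w x i = \sum_j w j * lmon x (a j) * (a j i)%:~R.
  by apply: eq_bigr => j _; rewrite mulrAC.
split=> [[x [xnz [f0 d0]]]|[x xnz [f0 d0]]].
  by exists x => //; split=> // i; rewrite -E.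
by exists x; split=> //; split=> // i; rewrite E.
Qed.

Lemma nabla_pos_of_kernel (v : 'I_k -> R) (y : 'I_n -> R) :
  toric_kernel a v -> (forall j, 0 < sgn R (s j) * v j) -> (forall i, 0 < y i) ->
  nabla_pos a s (fun j => sgn R (s j) * v j / lmon y (a j)).
Proof.
move=> kv vpos ypos; apply/nabla_posE; split=> [j|].
  by rewrite divr_gt0 ?lmon_gt0.
exists y => //; apply: eq_toric_kernel kv => j.
by rewrite !mulrA mul_sgn_sgn mul1r divfK // gt_eqF ?lmon_gt0.
Qed.

Definition complex_nabla_pos (y : 'I_k -> C) :=
  exists c : 'I_k -> R, nabla_pos a s c /\ y = (fun j => (c j)%:C).

Lemma tau_complex_nabla_pos y : complex_nabla_pos y -> has_sing_zero a (tau s y).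
Proof.
move=> [c [/nabla_posE[_ [x xpos kc]] ->]]; apply/has_sing_zeroE.
exists (fun i => (x i)%:C) => [i|]; first by rewrite fmorph_eq0 gt_eqF.
apply: eq_toric_kernel (toric_kernel_additive (real_complex R) kc) => j /=.
by rewrite /tau !rmorphM fmorph_lmon rmorph_sgn.
Qed.

End SignedSupport.

Section KernelPointsInClosure.
Variables (R : realType) (n k : nat) (a : 'I_k -> 'I_n -> int) (s : 'I_k -> bool).
Local Notation C := R[i].

Lemma kernel_perturbation_nabla_pos (v0 r r' : 'I_k -> R) :
  toric_kernel a v0 -> (forall j, 0 < sgn R (s j) * v0 j) ->
  toric_kernel a r -> toric_kernel a r' ->
  exists2 rho : R, 0 < rho & forall l m (y : 'I_n -> R),
    `|l| <= rho -> `|m| <= rho -> (forall i, 0 < y i) ->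
    nabla_pos a s (fun j => sgn R (s j) * (v0 j + l * r j + m * r' j) / lmon y (a j)).
Proof.
move=> kv0 v0_pos kr kr'.
have [rho rho_gt0 pert] := small_perturbation_gt0
  (fun j => sgn R (s j) * r j) (fun j => sgn R (s j) * r' j) v0_pos.
exists rho => // l m y hl hm y_pos; apply: nabla_pos_of_kernel => // [|j].
  by apply: toric_kernelDZ => //; apply: toric_kernelDZ.
have -> : sgn R (s j) * (v0 j + l * r j + m * r' j) =
  sgn R (s j) * v0 j + l * (sgn R (s j) * r j) + m * (sgn R (s j) * r' j) by ring.
exact: pert.
Qed.

Lemma kernel_point_in_closure (v0 : 'I_k -> R) (u : 'I_k -> C) (x : 'I_n -> C) :
  toric_kernel a v0 -> (forall j, 0 < sgn R (s j) * v0 j) ->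
  toric_kernel a u -> (forall i, x i != 0) ->
  zariski_closure (complex_nabla_pos a s)
    (fun j => sgn C (s j) * u j / lmon x (a j)).
Proof.
move=> kv0 v0_pos ku xnz p p0.
pose r j := complex.Re (u j - (v0 j)%:C); pose r' j := complex.Im (u j - (v0 j)%:C).
have kd : toric_kernel a (fun j => u j - (v0 j)%:C).
  apply: eq_toric_kernel (toric_kernelDZ (-1) ku
    (toric_kernel_additive (real_complex R) kv0)) => j /=.
  by rewrite mulN1r.
have [rho rho_gt0 pert] := kernel_perturbation_nabla_pos kv0 v0_pos
  (toric_kernel_additive (@complex.Re R) kd) (toric_kernel_additive (@complex.Im R) kd).
(* The variables [inl true], [inl false] and [inr i] of [G] play the roles of the
   perturbation parameters [l], [m] and of the coordinates [x i]. *)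
pose G (w : bool + 'I_n -> C) := p.@[fun j => sgn C (s j) *
  ((v0 j)%:C + w (inl true) * (r j)%:C + w (inl false) * (r' j)%:C) /
  lmon (w \o inr) (a j)].
have G_laurent : separately_laurent G.
  have coordM v (c : C) : separately_laurent (fun w : bool + 'I_n -> C => w v * c).
    apply: separately_laurentM; first exact: separately_laurent_coord.
    exact: separately_laurent_cst.
  apply: separately_laurent_meval => j.
  apply: separately_laurentM; last exact: separately_laurent_lmonV.
  apply: separately_laurentM; first exact: separately_laurent_cst.
  apply: separately_laurentD; last exact: coordM.
  by apply: separately_laurentD; [exact: separately_laurent_cst | exact: coordM].
pose g (t : nat) := rho / t.+1%:R; pose f t := (g t)%:C.
have g_gt0 t : 0 < g t by rewrite divr_gt0 ?ltr0Sn.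
have g_le t : `|g t| <= rho.
  by rewrite ger0_norm ?(ltW (g_gt0 t)) // /g ler_pdivrMr ?ltr0Sn // ler_pMr // ler1n.
have f_inj : injective f.
  move=> t t' /complexI /(mulfI (lt0r_neq0 rho_gt0)) /invr_inj /eqP.
  by rewrite eqr_nat eqSS => /eqP.
have f_neq0 t : f t != 0 by rewrite fmorph_eq0 gt_eqF.
have G_samples (t : bool + 'I_n -> nat) : G (f \o t) = 0.
  have := pert _ _ (g \o t \o inr) (g_le (t (inl true))) (g_le (t (inl false)))
    (fun _ => g_gt0 _).
  move=> /(fun c_pos => p0 _ (ex_intro _ _ (conj c_pos erefl))) <-.
  apply: meval_eq => j /=.
  by rewrite fmorph_div rmorphM rmorph_sgn fmorph_lmon !rmorphD !(rmorphM _ (g _)).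
pose w1 (v : bool + 'I_n) : C :=
  match v with inl true => 1 | inl false => 'i | inr i => x i end.
have w1_neq0 v : w1 v != 0.
  case: v => [[]|i] //=; first exact: oner_neq0.
  by apply/eqP => /(congr1 (@complex.Im R)) /= /eqP; rewrite oner_eq0.
rewrite -(separately_laurent_eq0 G_laurent f_inj f_neq0 G_samples w1_neq0).
apply: meval_eq => j /=.
by rewrite mul1r -addrA -complexE addrC subrK.
Qed.

Lemma tau_sing_zero_in_closure (w : 'I_k -> C) :
  (exists c : 'I_k -> R, nabla_pos a s c) -> has_sing_zero a w ->
  zariski_closure (complex_nabla_pos a s) (tau s w).
Proof.
move=> [c /nabla_posE[c_pos [y y_pos kc]]] /has_sing_zeroE[x x_neq0 kw].
have v_pos j : 0 < sgn R (s j) * (sgn R (s j) * c j * lmon y (a j)).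
  by rewrite !mulrA mul_sgn_sgn mul1r mulr_gt0 ?lmon_gt0.
have := kernel_point_in_closure kc v_pos kw x_neq0.
congr zariski_closure; apply: functional_extensionality => j.
by rewrite mulrA mulfK // lmon_neq0.
Qed.

End KernelPointsInClosure.

Section TauClosure.
Variables (R : realType) (k : nat) (s : 'I_k -> bool).
Local Notation C := R[i].

Lemma tauK : involutive (@tau R k s).
Proof.
by move=> z; apply: functional_extensionality => j; rewrite /tau mulrA mul_sgn_sgn mul1r.
Qed.

Lemma meval_tau (p : {mpoly C[k]}) (v : 'I_k -> C) :
  (p \mPo [tuple sgn C (s j) *: 'X_j | j < k]).@[v] = p.@[tau s v].
Proof.
rewrite comp_mpoly_meval; apply: meval_eq => j.
by rewrite tnth_mktuple mevalZ mevalXU.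
Qed.

Lemma tau_zariski_closure (S T : ('I_k -> C) -> Prop) :
  (forall y, S y -> zariski_closure T (tau s y)) ->
  forall w, zariski_closure S w -> zariski_closure T (tau s w).
Proof.
move=> ST w Sw p pT; rewrite -meval_tau; apply: Sw => y /ST Ty.
by rewrite meval_tau; apply: Ty.
Qed.

End TauClosure.

Theorem proposition2p6 (R : realType) (n k : nat)
  (a : 'I_k -> 'I_n -> int) (s : 'I_k -> bool) :
  injective a ->
  full_dim R a ->
  (exists c : 'I_k -> R, nabla_pos a s c) ->
  forall z : 'I_k -> R[i],
    (exists w, disc_variety a w /\ z = tau s w) <->
    zariski_closure
      (fun y : 'I_k -> R[i] =>
         exists c : 'I_k -> R, nabla_pos a s c /\ y = (fun j => (c j)%:C)) z.
Proof.
move=> _ _ pos z; split.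
  move=> [w [w_disc ->]]; apply: tau_zariski_closure w_disc => y.
  exact: tau_sing_zero_in_closure.
move=> z_clos; exists (tau s z); rewrite tauK; split=> //.
apply: tau_zariski_closure z_clos => y /tau_complex_nabla_pos y_sing p p0.
exact: p0.
Qed.
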